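(* Let $p$ be a prime, $q$ a power of $p$, $U\in\mathcal A_m^*$, $\sigma:\mathcal A_m\to\mathcal A_m^*$ a $p$-uniform morphism and $\varphi:\mathcal A_m\to\mathbb{F}_q$ a coding. Let $t\in\mathbb{N}^*$, $r=p^t$, and $\alpha\in\mathbb{F}_r$ (with $\mathbb{F}_q$ and $\mathbb{F}_r$ inside a common algebraic closure of $\mathbb{F}_p$). Then the sequence $\big(P_{\varphi(\sigma^n(U))}(\alpha)\big)_{n\ge0}$ is ultimately periodic.
   Context: $\mathcal A_m=\{0,\dots,m-1\}$. A $p$-uniform morphism sends each letter to a word of length $p$ and acts on words by concatenation; a coding is a letter-to-letter map applied letterwise. For a word $W=w_0\cdots w_{s-1}$ over $\mathbb{F}_q$, $P_W(T)=\sum_{j=0}^{s-1}w_{s-1-j}T^j\in\mathbb{F}_q[T]$. *)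

From HB Require Import structures.
From mathcomp Require Import all_boot all_order all_algebra.
Set Implicit Arguments. Unset Strict Implicit. Unset Printing Implicit Defensive.
Import GRing.Theory.
Local Open Scope ring_scope.

(* Alphabet A_m = 'I_m ; words = seq 'I_m. *)

Definition uniform_morphism (m p : nat) (sigma : 'I_m -> seq 'I_m) : Prop :=
  forall a : 'I_m, size (sigma a) = p.

Definition morph_word (m : nat) (sigma : 'I_m -> seq 'I_m) (w : seq 'I_m) :
  seq 'I_m := flatten (map sigma w).

Definition polW (R : nzRingType) (W : seq R) : {poly R} :=
  \sum_(j < size W) W`_(size W - 1 - j) *: 'X^j.

Definition ultimately_periodic (T : Type) (u : nat -> T) : Prop :=
  exists N P : nat, (0 < P)%N /\ forall n, (N <= n)%N -> u (n + P)%N = u n.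

From HB Require Import structures.
From mathcomp Require Import all_boot all_order all_algebra.
From mathcomp Require Import zify ring.
Set Implicit Arguments.
Unset Strict Implicit.
Unset Printing Implicit Defensive.
Local Open Scope ring_scope.
Import GRing.Theory.

(* Let K = p^(kt), so that alpha and all phi a are fixed by x |-> x^K. Since
   sigma is p-uniform, substituting sigma into a word W and evaluating at b
   amounts to evaluating W at b^p with the letter values a |-> P_(phi(sigma a))(b).
   Hence the n-th term is the value of U under a state (letter values, point)
   obtained by iterating one map n times from (phi, alpha). The fixed points of
   x |-> x^K form a finite subfield containing all these states' entries, so
   the states range over a finite set and their iteration is ultimately
   periodic. *)

Lemma ultimately_periodic_comp (T T' : Type) (g : T -> T') (u : nat -> T)
    (v : nat -> T') :
  (forall n, v n = g (u n)) -> ultimately_periodic u -> ultimately_periodic v.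
Proof.
move=> vE [N [P [P_gt0 uP]]]; exists N, P; split=> // n le_Nn.
by rewrite !vE uP.
Qed.

Lemma iter_ultimately_periodic (T : Type) (f : T -> T) (x : T) (i j : nat) :
  (i < j)%N -> iter i f x = iter j f x ->
  ultimately_periodic (fun n => iter n f x).
Proof.
move=> lt_ij eq_ij; exists i, (j - i)%N; split; first by rewrite subn_gt0.
move=> n le_in; have -> : (n + (j - i) = (n - i) + j)%N by lia.
by rewrite iterD -eq_ij -iterD subnK.
Qed.

Lemma iter_ultimately_periodic_inj (T : Type) (fT : finType) (f : T -> T)
    (P : T -> Prop) (code : T -> fT) (x : T) :
  P x -> (forall y, P y -> P (f y)) ->
  (forall y z, P y -> P z -> code y = code z -> y = z) ->
  ultimately_periodic (fun n => iter n f x).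
Proof.
move=> Px Pf code_inj.
have Piter n : P (iter n f x) by elim: n => //= n; apply: Pf.
pose s := [seq code (iter n f x) | n <- iota 0 #|fT|.+1].
have /(uniqPn (code x))[i [j [lt_ij lt_js eq_ij]]] : ~~ uniq s.
  apply/negP => /card_uniqP; rewrite size_map size_iota => card_s.
  by have := max_card (mem s); rewrite card_s ltnn.
rewrite size_map size_iota in lt_js.
have lt_is := ltn_trans lt_ij lt_js.
rewrite !(nth_map 0) ?size_iota // !nth_iota // !add0n in eq_ij.
exact: iter_ultimately_periodic lt_ij (code_inj _ _ (Piter i) (Piter j) eq_ij).
Qed.

Section FiniteStates.

Variables (T : eqType) (m : nat).

(* A state is a valuation of the letters together with an evaluation point. *)
Definition state := ({ffun 'I_m -> T} * T)%type.

Definition state_on (Q : T -> Prop) (st : state) :=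
  (forall a, Q (st.1 a)) /\ Q st.2.

Variable r : seq T.

Definition state_index (st : state) :
    {ffun 'I_m -> 'I_(size r).+1} * 'I_(size r).+1 :=
  ([ffun a => inord (index (st.1 a) r)], inord (index st.2 r)).

Lemma inord_index_inj x y :
  x \in r -> y \in r ->
  (inord (index x r) : 'I_(size r).+1) = inord (index y r) -> x = y.
Proof.
move=> xr yr /(congr1 val) /=; rewrite !inordK ?ltnS ?index_size //.
exact: index_inj.
Qed.

Lemma state_index_inj st st' :
  state_on (fun x => x \in r) st -> state_on (fun x => x \in r) st' ->
  state_index st = state_index st' -> st = st'.
Proof.
case: st st' => [f b] [f' b'] [/= fr br] [/= f'r b'r] [/ffunP eq_f eq_b].
congr (_, _); last exact: inord_index_inj eq_b.
apply/ffunP => a; have := eq_f a; rewrite !ffunE.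
exact: inord_index_inj.
Qed.

Lemma iter_state_ultimately_periodic (Q : T -> Prop) (S : state -> state)
    (st : state) :
  (forall x, Q x -> x \in r) -> state_on Q st ->
  (forall st, state_on Q st -> state_on Q (S st)) ->
  ultimately_periodic (fun n => iter n S st).
Proof.
move=> Qr Qst QS; apply: (@iter_ultimately_periodic_inj _ _ S _ state_index st Qst QS).
move=> y z [Qy1 Qy2] [Qz1 Qz2]; apply: state_index_inj.
- by split=> [a|]; apply: Qr.
- by split=> [a|]; apply: Qr.
Qed.

End FiniteStates.

Section WordValue.

Variables (R : comNzRingType) (m : nat).

Fixpoint word_value (f : 'I_m -> R) (b : R) (W : seq 'I_m) : R :=
  if W is a :: W' then f a * b ^+ size W' + word_value f b W' else 0.

Lemma eq_word_value (f g : 'I_m -> R) b W :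
  f =1 g -> word_value f b W = word_value g b W.
Proof. by move=> fg; elim: W => //= a W ->; rewrite fg. Qed.

Lemma word_value_cat f b A B :
  word_value f b (A ++ B) = word_value f b A * b ^+ size B + word_value f b B.
Proof.
elim: A => [|a A IH] /=; first by rewrite mul0r add0r.
rewrite IH size_cat exprD; ring.
Qed.

Lemma polW_cons (x : R) W : polW (x :: W) = x *: 'X^(size W) + polW W.
Proof.
rewrite /polW /= big_ord_recr /= addrC subn1 /= subnn; congr (_ + _).
apply: eq_bigr => i _.
by have -> : (size W - i = (size W - 1 - i).+1)%N by have := ltn_ord i; lia.
Qed.

Lemma horner_polW (f : 'I_m -> R) b W :
  (polW (map f W)).[b] = word_value f b W.
Proof.
elim: W => [|a W IH]; first by rewrite /polW big_ord0 horner0.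
by rewrite map_cons polW_cons hornerD hornerZ hornerXn IH size_map.
Qed.

Variables (p : nat) (sigma : 'I_m -> seq 'I_m).
Hypothesis sigma_uniform : uniform_morphism p sigma.

Lemma size_morph_word W : size (morph_word sigma W) = (p * size W)%N.
Proof.
elim: W => [|a W IH] /=; first by rewrite muln0.
by rewrite size_cat IH sigma_uniform mulnS.
Qed.

Lemma word_value_morph f b W :
  word_value f b (morph_word sigma W) =
  word_value (fun a => word_value f b (sigma a)) (b ^+ p) W.
Proof.
elim: W => //= a W IH.
by rewrite word_value_cat IH size_morph_word exprM.
Qed.

Definition morph_state (st : state R m) : state R m :=
  ([ffun a => word_value st.1 st.2 (sigma a)], st.2 ^+ p).

Lemma word_value_iter_morph n (st : state R m) W :
  word_value st.1 st.2 (iter n (morph_word sigma) W) =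
  word_value (iter n morph_state st).1 (iter n morph_state st).2 W.
Proof.
elim: n st => // n IH st.
rewrite iterS word_value_morph iterSr -IH /=.
by apply: eq_word_value => a; rewrite ffunE.
Qed.

End WordValue.

Section FrobeniusFixed.

Variables (R : comNzRingType) (p e : nat).
Hypothesis pcharRp : p \in [pchar R].

Local Notation fixed x := (x%R ^+ (p ^ e)%N = x%R).

Lemma fixed_pow0 : fixed (0 : R).
Proof. by rewrite expr0n expn_eq0 eqn0Ngt prime_gt0 ?(pcharf_prime pcharRp). Qed.

Lemma fixed_powD (x y : R) : fixed x -> fixed y -> fixed (x + y).
Proof.
move=> fx fy; rewrite exprDn_pchar ?fx ?fy //.
by rewrite pnatX (pnatE _ (pcharf_prime pcharRp)) pcharRp.
Qed.

Lemma fixed_powM (x y : R) : fixed x -> fixed y -> fixed (x * y).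
Proof. by move=> fx fy; rewrite exprMn fx fy. Qed.

Lemma fixed_powX (x : R) n : fixed x -> fixed (x ^+ n).
Proof. by move=> fx; rewrite exprAC fx. Qed.

Lemma fixed_word_value m (f : 'I_m -> R) b W :
  (forall a, fixed (f a)) -> fixed b -> fixed (word_value f b W).
Proof.
move=> ff fb; elim: W => [|a W IH] /=; first exact: fixed_pow0.
by apply: fixed_powD => //; apply: fixed_powM => //; apply: fixed_powX.
Qed.

Lemma fixed_morph_state m (sigma : 'I_m -> seq 'I_m) (st : state R m) :
  state_on (fun x => fixed x) st ->
  state_on (fun x => fixed x) (morph_state p sigma st).
Proof.
move=> [f1 f2]; split=> [a|] /=; last exact: fixed_powX.
by rewrite ffunE; apply: fixed_word_value.
Qed.

End FrobeniusFixed.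

Lemma fixed_pow_expn (R : nzSemiRingType) (x : R) n j :
  x ^+ n = x -> x ^+ (n ^ j)%N = x.
Proof.
move=> fx; elim: j => [|j IH]; first by rewrite expn0 expr1.
by rewrite expnSr exprM IH fx.
Qed.

Lemma fixed_pow_finite (L : closedFieldType) (n : nat) :
  (1 < n)%N -> {r : seq L | forall x, x ^+ n = x -> x \in r}.
Proof.
move=> gt1n; have [r Pr] := closed_field_poly_normal ('X^n - 'X : {poly L}).
exists r => x fx; rewrite -root_prod_XsubC.
have P_neq0 : ('X^n - 'X : {poly L}) != 0.
  apply/eqP => /(congr1 (fun P : {poly L} => P`_n)).
  rewrite coefB coefXn coefX eqxx coef0 (gtn_eqF gt1n) subr0.
  by move/eqP; rewrite oner_eq0.
have : root ('X^n - 'X : {poly L}) x by rewrite /root !hornerE fx subrr.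
by rewrite {1}Pr rootZ // lead_coef_eq0.
Qed.

Theorem proposition4p15
  (p q : nat) (L : closedFieldType) (m : nat)
  (Hp : prime p) (HpL : p \in [pchar L])
  (Hq : exists k : nat, (0 < k)%N /\ q = (p ^ k)%N)
  (U : seq 'I_m) (sigma : 'I_m -> seq 'I_m) (Hsigma : uniform_morphism p sigma)
  (phi : 'I_m -> L) (Hphi : forall a : 'I_m, phi a ^+ q = phi a)
  (t : nat) (Ht : (0 < t)%N) (alpha : L) (Halpha : alpha ^+ (p ^ t)%N = alpha) :
  ultimately_periodic
    (fun n : nat => (polW (map phi (iter n (morph_word sigma) U))).[alpha]).
Proof.
case: Hq => k [k_gt0 ->] in Hphi *.
have K_gt1 : (1 < p ^ (k * t))%N.
  by rewrite -{1}(expn0 p) ltn_exp2l ?prime_gt1 // muln_gt0 k_gt0.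
have [r fixed_r] := fixed_pow_finite L K_gt1.
pose st0 : state L m := ([ffun a => phi a], alpha).
apply: (ultimately_periodic_comp
  (g := fun st : state L m => word_value st.1 st.2 U)
  (u := fun n => iter n (morph_state p sigma) st0)).
  move=> n; rewrite horner_polW -word_value_iter_morph //.
  by apply: eq_word_value => a; rewrite ffunE.
apply: (iter_state_ultimately_periodic fixed_r) => [|st].
- split=> [a|] /=; first by rewrite ffunE expnM fixed_pow_expn.
  by rewrite mulnC expnM fixed_pow_expn.
- exact: (@fixed_morph_state L p (k * t) HpL).
Qed.
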